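(* Let $x_j$ be a real random variable and $\boldsymbol{x}_C$ a random vector independent of $x_j$. If $f(x_j,\boldsymbol{x}_C)=g(x_j)+h(\boldsymbol{x}_C)$, where $g$ is a function of $x_j$ only and $h$ is a function of $\boldsymbol{x}_C$ only, then $$\mathbb{E}_{\boldsymbol{x}_C}\big[I_{ice}(x_j;\boldsymbol{x}_C)\big]=I_{pdp}(x_j).$$
   Context: Inputs are $\boldsymbol{x}=(x_1,\dots,x_m)$ with independent components; $C=\{1,\dots,m\}\setminus\{j\}$ and $\boldsymbol{x}_C$ denotes the vector of the inputs with indices in $C$. $\mathbb{E}_{z}$ and $\mathbb{V}_{z}$ denote expectation and variance taken with respect to the random variable $z$ only, the other arguments being held fixed. For a fixed value of $\boldsymbol{x}_C$, the ICE importance is $I_{ice}(x_j;\boldsymbol{x}_C)=\sqrt{\mathbb{V}_{x_j}[f(x_j,\boldsymbol{x}_C)]}$. The PDP importance is $I_{pdp}(x_j)=\sqrt{\mathbb{V}_{x_j}\big[\mathbb{E}_{\boldsymbol{x}_C}[f(x_j,\boldsymbol{x}_C)]\big]}$. All expectations and variances involved are assumed to exist and be finite. *)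

From HB Require Import structures.
From mathcomp Require Import all_boot all_order all_algebra.
From mathcomp Require Import all_classical all_reals all_analysis.
Set Implicit Arguments. Unset Strict Implicit. Unset Printing Implicit Defensive.
Import Order.TTheory GRing.Theory Num.Theory.
Local Open Scope classical_set_scope.
Local Open Scope ring_scope.

Definition indep_rv {d d1 d2} {Omega : measurableType d} {R : realType}
  (P : probability Omega R) {T1 : measurableType d1} {T2 : measurableType d2}
  (X : Omega -> T1) (Y : Omega -> T2) : Prop :=
  forall (A : set T1) (B : set T2), measurable A -> measurable B ->
    P (X @^-1` A `&` Y @^-1` B) = (P (X @^-1` A) * P (Y @^-1` B))%E.

Definition I_ice {d dC} {Omega : measurableType d} {R : realType}
  (P : probability Omega R) {TC : measurableType dC}
  (f : R -> TC -> R) (Xj : Omega -> R) (c : TC) : R :=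
  Num.sqrt (fine ('V_P[fun w => f (Xj w) c])).

Definition pd_fun {d dC} {Omega : measurableType d} {R : realType}
  (P : probability Omega R) {TC : measurableType dC}
  (f : R -> TC -> R) (XC : Omega -> TC) (x : R) : R :=
  fine ('E_P[fun w => f x (XC w)]).

Definition I_pdp {d dC} {Omega : measurableType d} {R : realType}
  (P : probability Omega R) {TC : measurableType dC}
  (f : R -> TC -> R) (Xj : Omega -> R) (XC : Omega -> TC) : R :=
  Num.sqrt (fine ('V_P[fun w => pd_fun P f XC (Xj w)])).

(* For an additive model f(x, c) = g(x) + h(c), every ICE curve x |-> f(x, c)
   is the translate g + h(c) of g, and the partial dependence function
   x |-> E[f(x, x_C)] is the translate g + E[h(x_C)].  Variance is invariant
   under translation, so every ICE importance and the PDP importance equal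
   sqrt(V[g(x_j)]); the expectation of a constant is that constant. *)
From HB Require Import structures.
From mathcomp Require Import all_boot all_order all_algebra.
From mathcomp Require Import all_classical all_reals all_analysis.
Set Implicit Arguments. Unset Strict Implicit. Unset Printing Implicit Defensive.
Import Order.TTheory GRing.Theory Num.Theory.
Local Open Scope classical_set_scope.
Local Open Scope ring_scope.

Section translation_invariance.
Context (R : realType) (d : measure_display) (Omega : measurableType d)
  (P : probability Omega R).

Lemma probability_setT_neq0 : [set: Omega] !=set0.
Proof.
apply/set0P/negP => /eqP T0.
by have := probability_setT P; rewrite T0 measure0 => /eqP; rewrite eqe eq_sym oner_eq0.
Qed.

Lemma expectationD_cst_r (X : Omega -> R) (c : R) : X \in Lfun P 1 ->
  'E_P[X \+ cst c]%E = ('E_P[X] + c%:E)%E.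
Proof. by move=> X1; rewrite expectationD ?Lfun_cst// expectation_cst. Qed.

(* Unlike the library's [varianceD_cst_r], only integrability is assumed,
   so the (possibly infinite) variance is covered too. *)
Lemma varianceD_cst_r_Lfun1 (X : Omega -> R) (c : R) : X \in Lfun P 1 ->
  'V_P[X \+ cst c] = 'V_P[X].
Proof.
move=> X1; rewrite /variance unlock.
have -> : fine 'E_P[X \+ cst c]%E = fine 'E_P[X]%E + c.
  by rewrite expectationD_cst_r// fineD ?expectation_fin_num.
congr ('E_P[_])%E; apply/funext => w /=.
by congr (_ * _); rewrite /= opprD addrACA subrr addr0.
Qed.

End translation_invariance.

Section additive_model.
Context (R : realType) (d dC : measure_display) (Omega : measurableType d)
  (P : probability Omega R) (TC : measurableType dC)
  (Xj : Omega -> R) (XC : Omega -> TC)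
  (f : R -> TC -> R) (g : R -> R) (h : TC -> R).
Hypothesis fE : forall x c, f x c = g x + h c.

Lemma additive_Lfun1_l (c : TC) :
  P.-integrable setT (fun w => (f (Xj w) c)%:E) -> g \o Xj \in Lfun P 1.
Proof.
move=> /Lfun1_integrable fc1.
have -> : g \o Xj = (fun w => f (Xj w) c) \- cst (h c).
  by apply/funext => w /=; rewrite fE addrK.
by rewrite rpredB ?Lfun_cst.
Qed.

Lemma additive_Lfun1_r (x : R) :
  P.-integrable setT (fun w => (f x (XC w))%:E) -> h \o XC \in Lfun P 1.
Proof.
move=> /Lfun1_integrable fx1.
have -> : h \o XC = (fun w => f x (XC w)) \- cst (g x).
  by apply/funext => w /=; rewrite fE addrC addKr.
by rewrite rpredB ?Lfun_cst.
Qed.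

Lemma I_ice_additive (c : TC) : g \o Xj \in Lfun P 1 ->
  I_ice P f Xj c = Num.sqrt (fine 'V_P[g \o Xj]).
Proof.
move=> g1; rewrite /I_ice -(varianceD_cst_r_Lfun1 (h c) g1).
by congr (Num.sqrt (fine 'V_P[_])); apply/funext => w /=; rewrite fE.
Qed.

Lemma pd_fun_additive (x : R) : h \o XC \in Lfun P 1 ->
  pd_fun P f XC x = g x + fine 'E_P[h \o XC].
Proof.
move=> h1; rewrite /pd_fun.
have -> : (fun w => f x (XC w)) = h \o XC \+ cst (g x).
  by apply/funext => w /=; rewrite fE addrC.
by rewrite expectationD_cst_r// fineD ?expectation_fin_num// addrC.
Qed.

Lemma I_pdp_additive : g \o Xj \in Lfun P 1 -> h \o XC \in Lfun P 1 ->
  I_pdp P f Xj XC = Num.sqrt (fine 'V_P[g \o Xj]).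
Proof.
move=> g1 h1; rewrite /I_pdp -(varianceD_cst_r_Lfun1 (fine 'E_P[h \o XC]) g1).
by congr (Num.sqrt (fine 'V_P[_])); apply/funext => w /=; rewrite pd_fun_additive.
Qed.

End additive_model.

Theorem theorem1 (R : realType) (d dC : measure_display)
  (Omega : measurableType d) (P : probability Omega R)
  (TC : measurableType dC)
  (Xj : Omega -> R) (XC : Omega -> TC)
  (f : R -> TC -> R) (g : R -> R) (h : TC -> R) :
  measurable_fun setT Xj -> measurable_fun setT XC ->
  indep_rv P Xj XC ->
  measurable_fun setT g -> measurable_fun setT h ->
  (forall x c, f x c = g x + h c) ->
  (* standing assumption: all expectations and variances involved are finite *)
  (forall c, P.-integrable setT (fun w => (f (Xj w) c)%:E)) ->
  (forall c, P.-integrable setT (fun w => ((f (Xj w) c) ^+ 2)%:E)) ->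
  (forall x, P.-integrable setT (fun w => (f x (XC w))%:E)) ->
  P.-integrable setT (fun w => (pd_fun P f XC (Xj w))%:E) ->
  P.-integrable setT (fun w => ((pd_fun P f XC (Xj w)) ^+ 2)%:E) ->
  P.-integrable setT (fun w => (I_ice P f Xj (XC w))%:E) ->
  'E_P[fun w => I_ice P f Xj (XC w)]%E = (I_pdp P f Xj XC)%:E.
Proof.
move=> _ _ _ _ _ fE iXj _ iXC _ _ _.
have [w0 _] := probability_setT_neq0 P.
have g1 := additive_Lfun1_l fE (iXj (XC w0)).
have h1 := additive_Lfun1_r fE (iXC 0).
have -> : (fun w => I_ice P f Xj (XC w)) = cst (Num.sqrt (fine 'V_P[g \o Xj])).
  by apply/funext => w; rewrite (I_ice_additive fE).
by rewrite expectation_cst (I_pdp_additive fE).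
Qed.
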